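(* In the distributed leader election algorithm (described in the context) with parameter $X>1$, while a fragment is in the work state, the number of messages sent in the fragment is at most $3k$, where $k$ is the number of nodes within the fragment.
   Context: Model: the network is a finite connected undirected graph $G=(V,E)$ with $n=|V|$ nodes having distinct identity numbers; each node knows its number of neighbors. When a node transmits a message it is received by all of its neighbors (and only them), without errors and in the order of transmission; one transmission counts as one message regardless of the number of receivers. Fragment identities: a fragment $F$ (set of nodes supporting a candidate node) has identity $id(F)=(size, identity)$ (recorded size, candidate's identity number), compared lexicographically (first by size, then by identity). Distributed algorithm with parameter $X>1$: within a fragment, information is spread by fragment-PIF cycles: a source node (normally the candidate) broadcasts an INFO message carrying the fragment's current identity; every node of the fragment, upon first receiving its fragment's INFO, records the sender as its parent and rebroadcasts it once; a node that hears broadcasts from nodes of other fragments records the largest such fragment identity. A node that has received a broadcast from all its neighbors and a FEEDBACK message from all its children in the fragment sends one FEEDBACK message to its parent, containing the number of fragment nodes in its subtree and the largest neighboring-fragment identity known in that subtree. When the candidate has received broadcasts from all its neighbors and FEEDBACK from all its children, it compares the counted size new\_size with the size $s'$ of the maximal neighboring fragment: if new\_size $> X s'$ the fragment stays active, updates its size and the candidate broadcasts a new INFO; otherwise the candidate sends an ACTION message along a recorded path to an edge node adjacent to that maximal neighboring fragment, which broadcasts an INFO carrying the joined fragment's identity; the nodes of the old fragment propagate it and thereby join that fragment. A candidate that learns that its fragment has no neighboring fragment becomes the leader. The work state of a fragment is the phase consisting of the FEEDBACK collection, the candidate's decision, and the subsequent ACTION and INFO propagation through the fragment. *)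

From mathcomp Require Import all_boot all_order all_algebra.
Set Implicit Arguments. Unset Strict Implicit. Unset Printing Implicit Defensive.
Import Order.TTheory GRing.Theory Num.Theory.

(* fragment identity: (recorded size, candidate's identity number) *)
Definition fid := (nat * nat)%type.

Definition fid_lt (a b : fid) : bool :=
  (a.1 < b.1) || ((a.1 == b.1) && (a.2 < b.2)).

(* maximum of two optional identities (None = no neighbouring fragment known) *)
Definition omax_fid (a b : option fid) : option fid :=
  match a, b with
  | None, _ => b
  | _, None => a
  | Some x, Some y => if fid_lt x y then Some y else Some x
  end.

(* Feedback d n b : FEEDBACK addressed to d, with subtree count n and the
                    largest neighbouring-fragment identity b of the subtree.
   Action d       : ACTION addressed to d. *)
Inductive msg (V : Type) : Type :=
| Feedback of V & nat & option fid
| Action of V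
| Info of fid.
Arguments Feedback {V}.
Arguments Action {V}.
Arguments Info {V}.

Definition is_feedback V (m : msg V) : bool :=
  if m is Feedback _ _ _ then true else false.
Definition is_action V (m : msg V) : bool :=
  if m is Action _ then true else false.
Definition is_info V (m : msg V) : bool :=
  if m is Info _ then true else false.

(* Global configuration: the list of all transmissions so far (sender,
   message) in order, and for each ordered pair (v,u) the number of messages
   of u already received by v (broadcasts are delivered in order, without
   errors, to every neighbour). *)
Record config (V : Type) := Config {
  hist : seq (V * msg V);
  rcvd : V -> V -> nat }.

Section WorkState.
Variables (R : realFieldType) (X : R) (V : finType) (adj : rel V)
  (F : {set V}) (cand : V) (par : V -> V) (ident : V -> nat)
  (nbf : V -> option fid).
(* adj   : the graph
   F     : the fragment, cand its candidate
   par   : parent pointers recorded in the fragment's INFO broadcast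
   ident : identity numbers
   nbf v : largest neighbouring-fragment identity recorded by v from the
           broadcasts of its neighbours (None if none) *)

Definition sent_by (h : seq (V * msg V)) (u : V) : seq (msg V) :=
  [seq e.2 | e <- h & e.1 == u].

Definition received (s : config V) (v u : V) : seq (msg V) :=
  take (rcvd s v u) (sent_by (hist s) u).

Definition has_sent (s : config V) (v : V) (P : pred (msg V)) : bool :=
  has P (sent_by (hist s) v).

Definition children (v : V) : seq V :=
  [seq w <- enum V | (w \in F) && (w != cand) && (par w == v)].

Definition fb_to (v : V) (m : msg V) : option (nat * option fid) :=
  if m is Feedback d n b then (if d == v then Some (n, b) else None) else None.

Definition fb_from (s : config V) (v w : V) : option (nat * option fid) :=
  ohead (pmap (fb_to v) (received s v w)).

Definition fb_dflt : nat * option fid := (0%N, None).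

Definition all_fb (s : config V) (v : V) : bool :=
  all (fun w => fb_from s v w != None) (children v).

Definition sub_count (s : config V) (v : V) : nat :=
  (sumn [seq (odflt fb_dflt (fb_from s v w)).1 | w <- children v]).+1.

Definition sub_best (s : config V) (v : V) : option fid :=
  foldr omax_fid (nbf v) [seq (odflt fb_dflt (fb_from s v w)).2 | w <- children v].

Definition decided_active (s : config V) : bool :=
  all_fb s cand &&
  (if sub_best s cand is Some i then (X * (i.1)%:R < (sub_count s cand)%:R)%R
   else false).

Definition decided_join (s : config V) : bool :=
  all_fb s cand &&
  (if sub_best s cand is Some i then ~~ (X * (i.1)%:R < (sub_count s cand)%:R)%R
   else false).

Definition action_to (v : V) (m : msg V) : bool :=
  if m is Action d then d == v else false.

Definition on_path (s : config V) (v : V) : bool :=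
  if v == cand then decided_join s
  else has (action_to v) (received s v (par v)).

Definition info_is (i : fid) (m : msg V) : bool :=
  if m is Info j then j == i else false.

Definition allowed (s : config V) (v : V) (m : msg V) : Prop :=
  v \in F /\
  match m with
  | Feedback d n b =>
      [/\ v != cand, ~~ has_sent s v (@is_feedback V), all_fb s v
        & [/\ d = par v, n = sub_count s v & b = sub_best s v]]
  | Action d =>
      [/\ on_path s v, sub_best s v != nbf v,
          ~~ has_sent s v (@is_action V), d \in children v
        & omap snd (fb_from s v d) = Some (sub_best s v)]
  | Info i =>
      ~~ has_sent s v (@is_info V) /\
      [\/ [/\ v = cand, decided_active s & i = (sub_count s cand, ident cand)],
          [/\ on_path s v, sub_best s v = nbf v & sub_best s v = Some i]
        | (exists u, [/\ u \in F, adj u v & has (info_is i) (received s v u)])]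
  end.

Inductive ws_step : config V -> config V -> Prop :=
| StepDeliver (s : config V) (u v : V) :
    adj u v -> rcvd s v u < size (sent_by (hist s) u) ->
    ws_step s (Config (hist s)
      (fun x y => if (x == v) && (y == u) then (rcvd s x y).+1 else rcvd s x y))
| StepSend (s : config V) (v : V) (m : msg V) :
    allowed s v m -> ws_step s (Config (rcons (hist s) (v, m)) (rcvd s)).

Definition ws_init : config V := Config [::] (fun _ _ => 0%N).

Inductive ws_reachable : config V -> Prop :=
| RInit : ws_reachable ws_init
| RStep (s s' : config V) : ws_reachable s -> ws_step s s' -> ws_reachable s'.

End WorkState.

From mathcomp Require Import all_boot all_order all_algebra.
From mathcomp Require Import zify.

(* Every transmission of the work state is made by a node of the fragment,
   and the guards of the protocol let a node send at most one FEEDBACK, one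
   ACTION and one INFO message. Hence a fragment of k nodes sends at most 3k
   messages. *)

Definition msg_kind {V} (m : msg V) : nat :=
  match m with Feedback _ _ _ => 0 | Action _ => 1 | Info _ => 2 end.

Lemma size_by_kind V (s : seq (msg V)) :
  size s = \sum_(k < 3) count (fun m => msg_kind m == k) s.
Proof.
rewrite !big_ord_recr big_ord0 /=.
by elim: s => [|[? ? ?|?|?] s IH] //=; rewrite IH; lia.
Qed.

Lemma sent_by_rcons (V : finType) (h : seq (V * msg V)) v m u :
  sent_by (rcons h (v, m)) u =
  if v == u then rcons (sent_by h u) m else sent_by h u.
Proof. by rewrite /sent_by filter_rcons /=; case: (v == u); rewrite ?map_rcons. Qed.

Lemma size_sent_by_sum [V : finType] [F : {set V}] [h : seq (V * msg V)] :
  all (fun e => e.1 \in F) h -> size h = \sum_(v in F) size (sent_by h v).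
Proof.
elim: h => [_|[u m] h IH /= /andP[uF /IH ->]]; first by rewrite big1.
rewrite [RHS](eq_bigr (fun v => (u == v) + size (sent_by h v))); last first.
  by move=> v _; rewrite /sent_by /=; case: (u == v).
rewrite big_split /= [X in _ = X + _](bigD1 u uF) /= eqxx.
rewrite [X in true + X]big1 // => v /andP[_].
by rewrite eq_sym => /negbTE ->.
Qed.

Section WorkStateTransmissions.

Context {R : realFieldType} {X : R} {V : finType} {adj : rel V}
  {F : {set V}} {cand : V} {par : V -> V} {ident : V -> nat}
  {nbf : V -> option fid}.

Local Notation allowed := (allowed X adj F cand par ident nbf).
Local Notation ws_step := (ws_step X adj F cand par ident nbf).
Local Notation ws_reachable := (ws_reachable X adj F cand par ident nbf).

Lemma ws_step_hist s s' : ws_step s s' ->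
  hist s' = hist s \/ exists v m, allowed s v m /\ hist s' = rcons (hist s) (v, m).
Proof. by case=> [|? v m vm]; [left | right; exists v, m]. Qed.

Lemma allowed_fresh_kind [s v m] : allowed s v m ->
  ~~ has (fun m' => msg_kind m' == msg_kind m) (sent_by (hist s) v).
Proof.
have guard_kind (P : pred (msg V)) k :
  ~~ has_sent s v P -> P =1 (fun m' => msg_kind m' == k) ->
  ~~ has (fun m' => msg_kind m' == k) (sent_by (hist s) v).
  by move=> fresh PE; rewrite -(eq_has PE).
case: m => [d n b|d|i] [_] /=.
- by case=> _ /guard_kind fresh _ _; apply: fresh; case.
- by case=> _ _ /guard_kind fresh _ _; apply: fresh; case.
- by case=> /guard_kind fresh _; apply: fresh; case.
Qed.

Lemma ws_reachable_senders [s] : ws_reachable s -> all (fun e => e.1 \in F) (hist s).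
Proof.
elim=> [//|s1 s2 _ IH /ws_step_hist [-> //|[v [m [[vF _] ->]]]]].
by rewrite all_rcons vF IH.
Qed.

Lemma ws_reachable_kind_once [s] : ws_reachable s ->
  forall v k, count (fun m => msg_kind m == k) (sent_by (hist s) v) <= 1.
Proof.
elim=> [//|s1 s2 _ IH /ws_step_hist [-> //|[v [m [vm ->]]]]] u k.
rewrite sent_by_rcons; case: eqP => [<-|_]; last exact: IH.
rewrite -cats1 count_cat /= addn0; case: eqP => [<-|_]; last by rewrite addn0.
by move: (allowed_fresh_kind vm); rewrite has_count -eqn0Ngt => /eqP ->.
Qed.

End WorkStateTransmissions.

Theorem lemma5 (R : realFieldType) (X : R) (V : finType) (adj : rel V)
  (F : {set V}) (cand : V) (par : V -> V) (ident : V -> nat)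
  (nbf : V -> option fid) :
  (1 < X)%R ->
  symmetric adj -> irreflexive adj -> (forall u v, connect adj u v) ->
  injective ident ->
  cand \in F ->
  (forall v, v \in F -> v != cand -> par v \in F /\ adj v (par v)) ->
  (forall v, v \in F -> exists n, iter n par v = cand) ->
  forall s : config V, ws_reachable X adj F cand par ident nbf s ->
  size (hist s) <= 3 * #|F|.
Proof.
move=> _ _ _ _ _ _ _ _ s reach_s.
rewrite (size_sent_by_sum (ws_reachable_senders reach_s)).
rewrite mulnC -sum_nat_const; apply: leq_sum => v _.
rewrite size_by_kind; apply: (@leq_trans (\sum_(k < 3) 1)).
  by apply: leq_sum => k _; apply: ws_reachable_kind_once reach_s v k.
by rewrite sum_nat_const card_ord.
Qed.
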